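(* Let $\mathbb{B}=ro(Add(\omega,1))$ (in $V$). Let $\dot{x}\in V^{\mathbb{B}}$ be such that $\Vdash\dot{x}\subseteq\check{V}\wedge\dot{x}\notin\check{V}$ and every element of $\dot{x}$ is of the form $\langle\check{n},c\rangle$ with $n\in V$ and $c\in\mathbb{B}$. Then for all $b\in\mathbb{B}$ there is some $\mathcal{A}\subseteq Aut(\mathbb{B})^{V}$ with $|\mathcal{A}|>\omega$ such that for all $\sigma\neq\tau$ in $\mathcal{A}$, $\sigma(b)=b=\tau(b)$ and $b\Vdash\sigma\dot{x}\neq\tau\dot{x}$.
   Context: $\mathbb{B}$ is the complete Boolean algebra of regular open subsets of Cohen forcing $Add(\omega,1)$. For $\sigma\in Aut(\mathbb{B})$ and a $\mathbb{B}$-name $\dot x$, $\sigma\dot x$ is the name obtained by applying $\sigma$ recursively. *)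

From mathcomp Require Import all_boot.
From mathcomp Require Import finmap.
Set Implicit Arguments. Unset Strict Implicit. Unset Printing Implicit Defensive.
Local Open Scope fmap_scope.

Definition cond := {fmap nat -> bool}.

(* q <= p  (q is stronger than / extends p) *)
Definition cle (q p : cond) : Prop :=
  forall (k : nat) (v : bool), p.[? k] = Some v -> q.[? k] = Some v.

Lemma cle_refl p : cle p p. Proof. by move=> k v. Qed.
Lemma cle_trans r q p : cle r q -> cle q p -> cle r p.
Proof. by move=> H1 H2 k v /H2 /H1. Qed.

(* regular-open interior of the closure: int(cl X) in the poset topology *)
Definition reg (X : cond -> Prop) : cond -> Prop :=
  fun p => forall q, cle q p -> exists r, cle r q /\ X r.

Definition regular_open (U : cond -> Prop) : Prop :=
  forall p, U p <-> reg U p.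

Lemma reg_regular X : regular_open (reg X).
Proof.
move=> p; split.
- move=> Hp q Hqp; exists q; split; first exact: cle_refl.
  move=> q' Hq'; exact: (Hp q' (cle_trans Hq' Hqp)).
- move=> H q Hqp; have [r [Hrq Hr]] := H q Hqp.
  have [r' [Hr'r Hr']] := Hr r (@cle_refl r).
  by exists r'; split => //; exact: cle_trans Hr'r Hrq.
Qed.

Definition B := {U : cond -> Prop | regular_open U}.

Definition mkB (X : cond -> Prop) : B := exist _ (reg X) (reg_regular X).
Definition inB (b : B) (p : cond) : Prop := proj1_sig b p.

Definition leB (a b : B) : Prop := forall p, inB a p -> inB b p.
Definition botB : B := mkB (fun _ => False).
Definition topB : B := mkB (fun _ => True).
Definition meetB (a b : B) : B := mkB (fun p => inB a p /\ inB b p).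
Definition joinB (a b : B) : B := mkB (fun p => inB a p \/ inB b p).
Definition complB (a : B) : B := mkB (fun p => forall q, cle q p -> ~ inB a q).
Definition impB (a b : B) : B := joinB (complB a) b.
Definition supB (P : B -> Prop) : B := mkB (fun p => exists b, P b /\ inB b p).
Definition infB (P : B -> Prop) : B := mkB (fun p => forall b, P b -> inB b p).

Definition is_aut (s : B -> B) : Prop :=
  bijective s /\
  (forall a b, s (meetB a b) = meetB (s a) (s b)) /\
  (forall a, s (complB a) = complB (s a)).

(* ---------- ground model V (Aczel sets) and B-names ---------- *)
Inductive ZF : Type := zsup : forall Ix : Type, (Ix -> ZF) -> ZF.

(* a B-name: a family of pairs <name, boolean value> *)
Inductive name : Type := Name : forall Ix : Type, (Ix -> name) -> (Ix -> B) -> name.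

Fixpoint check (n : ZF) : name :=
  match n with @zsup Ix f => @Name Ix (fun i => check (f i)) (fun _ => topB) end.

Fixpoint beq (x y : name) {struct x} : B :=
  match x, y with
  | @Name Ix f a, @Name Jx g c =>
    meetB
      (infB (fun v => exists i : Ix, v = impB (a i)
               (supB (fun w => exists j : Jx, w = meetB (c j) (beq (f i) (g j))))))
      (infB (fun v => exists j : Jx, v = impB (c j)
               (supB (fun w => exists i : Ix, w = meetB (a i) (beq (f i) (g j))))))
  end.

Definition in_checkV (x : name) : B :=
  supB (fun w => exists n : ZF, w = beq x (check n)).

Definition sub_checkV (x : name) : B :=
  match x with
  | @Name Ix f a => infB (fun v => exists i : Ix, v = impB (a i) (in_checkV (f i)))
  end.

Definition check_pairs (x : name) : Prop :=
  match x with @Name Ix f a => forall i : Ix, exists n : ZF, f i = check n end.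

Fixpoint act (s : B -> B) (x : name) : name :=
  match x with @Name Ix f a => @Name Ix (fun i => act s (f i)) (fun i => s (a i)) end.

Definition forces (b phi : B) : Prop := leB b phi.

Definition uncountable {T : Type} (A : T -> Prop) : Prop :=
  ~ exists h : {t : T | A t} -> nat, injective h.

From mathcomp Require Import all_boot finmap boolp.
Set Implicit Arguments. Unset Strict Implicit. Unset Printing Implicit Defensive.
Local Open Scope fmap_scope.

(* If a condition decided every statement [ň_i ∈ x] it would force [x = m̌] for the
   ground-model set [m] of the [n_i] it puts into [x]; so any two conditions have
   extensions [s1], [s2] and an [i] such that [s1] forces [ň_i] into [x] and [s2]
   forces it out.  A fusion argument yields disjoint finite blocks [G m] of Cohen
   coordinates such that, for every pair of conditions supported below block [m],
   flipping block [m] realizes such a splitting.  For [al : nat -> bool] let [σ_al]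
   flip block [m] iff [al (logn 2 m)], but only at coordinates beyond the length at
   which a condition decides [b]: this is an involution of a dense set of conditions,
   hence an automorphism of [B] fixing [b].  If [al n <> be n], every condition has
   an extension whose images under the two flips are split by a block [m] with
   [logn 2 m = n], so [σ_al x <> σ_be x] is forced everywhere.  There are
   [2 ^ omega] such [al]. *)

Lemma reg_le X p q : reg X p -> cle q p -> reg X q.
Proof. by move=> Xp qp r rq; apply: Xp; exact: cle_trans rq qp. Qed.

Lemma reg_sub (X Y : cond -> Prop) p : (forall q, X q -> Y q) -> reg X p -> reg Y p.
Proof. by move=> XY Xp q qp; have [r [rq /XY]] := Xp q qp; exists r. Qed.

Lemma reg_closed (X : cond -> Prop) p :
  (forall q r, X q -> cle r q -> X r) -> X p -> reg X p.
Proof. by move=> Xle Xp q qp; exists q; split; [exact: cle_refl | exact: Xle Xp qp]. Qed.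

Lemma reg_const (C : Prop) p : reg (fun _ => C) p <-> C.
Proof.
split=> [Creg | c]; first by have [r [_]] := Creg p (@cle_refl p).
by apply: reg_closed.
Qed.

Lemma inB_reg (u : B) p : reg (inB u) p <-> inB u p.
Proof. by case: u => U HU; split => /HU. Qed.

Lemma inB_le (u : B) p q : inB u p -> cle q p -> inB u q.
Proof. by move=> /inB_reg up qp; apply/inB_reg; exact: reg_le up qp. Qed.

Lemma inB_dense (u : B) p :
  (forall q, cle q p -> exists2 r, cle r q & inB u r) -> inB u p.
Proof. by move=> du; apply/inB_reg => q qp; have [r rq ur] := du q qp; exists r. Qed.

Lemma eqB (u v : B) : (forall p, inB u p <-> inB v p) -> u = v.
Proof.
case: u v => [U HU] [V HV] /= UV.
have E : U = V by apply: funext => p; apply: propext.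
by subst V; rewrite (Prop_irrelevance HU HV).
Qed.

Lemma inB_top p : inB topB p.
Proof. exact/reg_const. Qed.

Lemma inB_meet u v p : inB (meetB u v) p <-> inB u p /\ inB v p.
Proof.
split=> [uv | [up vp]].
  by split; apply/inB_reg; apply: reg_sub uv => q [].
by apply: reg_closed (conj up vp) => q r [uq vq] rq; split; exact: inB_le rq.
Qed.

Lemma inB_inf P p : inB (infB P) p <-> forall v, P v -> inB v p.
Proof.
split=> [Pinf v Pv | Pp].
  by apply/inB_reg; apply: reg_sub Pinf => q; apply.
by apply: reg_closed Pp => q r Pq rq v Pv; exact: inB_le (Pq v Pv) rq.
Qed.

Lemma inB_inf_fam (J : Type) (F : J -> B) p :
  inB (infB (fun v => exists j, v = F j)) p <-> forall j, inB (F j) p.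
Proof. by rewrite inB_inf; split=> [Fp j | Fp _ [j ->]]; apply: Fp; exists j. Qed.

Lemma inB_sup_intro P v p : P v -> inB v p -> inB (supB P) p.
Proof.
move=> Pv vp; apply: reg_closed; last by exists v.
by move=> q r [w [Pw wq]] rq; exists w; split => //; exact: inB_le wq rq.
Qed.

Lemma inB_sup_fam (J : Type) (F : J -> B) p :
  inB (supB (fun w => exists j, w = F j)) p <-> reg (fun q => exists j, inB (F j) q) p.
Proof.
split; apply: reg_sub => q; first by move=> [_ [[j ->] Fq]]; exists j.
by move=> [j Fq]; exists (F j); split => //; exists j.
Qed.

Lemma inB_compl u p : inB (complB u) p <-> forall q, cle q p -> ~ inB u q.
Proof.
split=> [cu q qp uq | Nu].
  have [r [rq Nr]] := cu q qp; exact: Nr r (@cle_refl r) (inB_le uq rq).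
by apply: reg_closed Nu => q r Nq rq s sr; apply: Nq; exact: cle_trans sr rq.
Qed.

Lemma inB_complN u p : ~ inB (complB u) p -> exists2 q, cle q p & inB u q.
Proof.
move=> Ncu; apply: contrapT => Nu; apply: Ncu; apply/inB_compl => q qp uq.
by apply: Nu; exists q.
Qed.

Lemma inB_imp u v p : inB (impB u v) p <-> forall q, cle q p -> inB u q -> inB v q.
Proof.
split=> [uv q qp uq | uv].
  apply/inB_reg => r rq; have [s [sr [cs | vs]]] := uv r (cle_trans rq qp); last by exists s.
  by exfalso; move/inB_compl: cs; apply; [exact: cle_refl | exact: inB_le uq (cle_trans sr rq)].
move=> q qp; have [[r [rq ur]] | Nr] := pselect (exists r, cle r q /\ inB u r).
  by exists r; split => //; right; apply: uv ur; exact: cle_trans rq qp.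
exists q; split; first exact: cle_refl.
by left; apply/inB_compl => r rq ur; apply: Nr; exists r.
Qed.

Lemma inB_imp_top v p : inB (impB topB v) p <-> inB v p.
Proof.
rewrite inB_imp; split=> [vq | vp q qp _]; last exact: inB_le vp qp.
exact: vq _ (@cle_refl p) (@inB_top p).
Qed.

Definition decides (u : B) (p : cond) : Prop := inB u p \/ inB (complB u) p.

Lemma decides_dense u q : exists2 r, cle r q & decides u r.
Proof.
have [cu | /inB_complN [r rq ur]] := pselect (inB (complB u) q); last by exists r => //; left.
by exists q; [exact: cle_refl | right].
Qed.

Lemma decides_le_iff u p q q' :
  decides u p -> cle q p -> cle q' p -> inB u q <-> inB u q'.
Proof.
move=> [up | /inB_compl Nu] qp q'p; first by split=> _; exact: inB_le up _.
by split=> uq; exfalso; [exact: Nu q qp uq | exact: Nu q' q'p uq].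
Qed.

Fixpoint zeq (n m : ZF) {struct n} : Prop :=
  match n, m with
  | @zsup Ix f, @zsup Jx g =>
    (forall i, exists j, zeq (f i) (g j)) /\ (forall j, exists i, zeq (f i) (g j))
  end.

Lemma zeq_refl n : zeq n n.
Proof. by elim: n => Ix f IH /=; split => i; exists i; exact: IH. Qed.

Lemma zeq_sym n m : zeq n m -> zeq m n.
Proof.
elim: n m => Ix f IH [Jx g] /= [fg gf]; split.
  by move=> j; have [i fgi] := gf j; exists i; exact: IH.
by move=> i; have [j fgj] := fg i; exists j; exact: IH.
Qed.

Lemma zeq_trans n m k : zeq n m -> zeq m k -> zeq n k.
Proof.
elim: n m k => Ix f IH [Jx g] [Kx h] /= [fg gf] [gh hg]; split.
  by move=> i; have [j fgj] := fg i; have [l ghl] := gh j; exists l; exact: IH fgj ghl.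
by move=> l; have [j ghj] := hg l; have [i fgi] := gf j; exists i; exact: IH fgi ghj.
Qed.


Lemma beq_check n m p : inB (beq (check n) (check m)) p <-> zeq n m.
Proof.
elim: n m p => Ix f IH [Jx g] p; cbn [check beq zeq].
rewrite inB_meet !inB_inf_fam.
have half (K : Type) (F : K -> B) (Q : K -> Prop) : (forall k q, inB (F k) q <-> Q k) ->
    inB (impB topB (supB (fun w => exists k, w = meetB topB (F k)))) p <-> exists k, Q k.
  move=> FQ; rewrite inB_imp_top inB_sup_fam -(@reg_const (exists k, Q k) p).
  split; apply: reg_sub => q [k].
    by rewrite inB_meet FQ => -[_ Qk]; exists k.
  by move=> Qk; exists k; rewrite inB_meet FQ; split => //; exact: inB_top.
have fg i := half _ (fun j => beq (check (f i)) (check (g j))) _ (fun j q => IH i (g j) q).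
have gf j := half _ (fun i => beq (check (f i)) (check (g j))) _ (fun i q => IH i (g j) q).
by split=> -[H1 H2]; split=> k; [exact/fg | exact/gf | exact/fg | exact/gf].
Qed.

Lemma act_check s n : s topB = topB -> act s (check n) = check n.
Proof.
move=> s_top; elim: n => Ix f IH /=; rewrite s_top.
by congr Name; apply: funext => i; exact: IH.
Qed.

(** * Automorphisms induced by dense involutions *)

Definition dense_involution (D : cond -> Prop) (pi : cond -> cond) : Prop :=
  [/\ forall q, exists2 r, cle r q & D r,
      forall q, D q -> D (pi q),
      forall q, D q -> pi (pi q) = q &
      forall q r, D q -> D r -> cle r q -> cle (pi r) (pi q)].

Definition aut_of (D : cond -> Prop) (pi : cond -> cond) (u : B) : B :=
  mkB (fun q => forall r, cle r q -> D r -> inB u (pi r)).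

Section DenseInvolution.
Variables (D : cond -> Prop) (pi : cond -> cond).
Hypothesis piD : dense_involution D pi.

Let D_dense : forall q, exists2 r, cle r q & D r. Proof. by case: piD. Qed.
Let D_pi : forall q, D q -> D (pi q). Proof. by case: piD. Qed.
Let piK : forall q, D q -> pi (pi q) = q. Proof. by case: piD. Qed.
Let pi_le : forall q r, D q -> D r -> cle r q -> cle (pi r) (pi q). Proof. by case: piD. Qed.

Lemma pi_leV q r : D q -> D r -> cle r (pi q) -> cle (pi r) q.
Proof. by move=> Dq Dr rq; rewrite -(piK Dq); exact: pi_le (D_pi Dq) Dr rq. Qed.

Lemma dense_eqB (u v : B) : (forall q, D q -> inB u q <-> inB v q) -> u = v.
Proof.
move=> uv; apply: eqB.
suff le_uv u' v' p : (forall q, D q -> inB u' q -> inB v' q) -> inB u' p -> inB v' p.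
  by move=> p; split; apply: le_uv => q Dq; rewrite uv.
move=> u'v' u'p; apply: inB_dense => q qp; have [r rq Dr] := D_dense q.
by exists r => //; apply: u'v' => //; exact: inB_le u'p (cle_trans rq qp).
Qed.

Lemma aut_ofE u q : D q -> inB (aut_of D pi u) q <-> inB u (pi q).
Proof.
move=> Dq; split=> [uq | upq].
  apply/inB_reg => t tpq; have [t0 t0t Dt0] := D_dense t.
  have [r1 [r1t0 Xr1]] := uq _ (pi_leV Dq Dt0 (cle_trans t0t tpq)).
  have [r2 r2r1 Dr2] := D_dense r1.
  exists (pi r2); split; last exact: Xr1 r2 r2r1 Dr2.
  exact: cle_trans (pi_leV Dt0 Dr2 (cle_trans r2r1 r1t0)) t0t.
apply: reg_closed => [q' r Xq' rq' t tr | r rq Dr]; first exact: Xq' (cle_trans tr rq').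
exact: inB_le upq (pi_le Dq Dr rq).
Qed.

Lemma aut_of_pi u t : D t -> inB u t -> inB (aut_of D pi u) (pi t).
Proof. by move=> Dt ut; rewrite (aut_ofE _ (D_pi Dt)) piK. Qed.

Lemma aut_ofK : involutive (aut_of D pi).
Proof. by move=> u; apply: dense_eqB => q Dq; rewrite aut_ofE // (aut_ofE _ (D_pi Dq)) piK. Qed.

Lemma aut_of_top : aut_of D pi topB = topB.
Proof. by apply: dense_eqB => q Dq; rewrite aut_ofE //; split=> _; exact: inB_top. Qed.

Lemma aut_of_meet u v : aut_of D pi (meetB u v) = meetB (aut_of D pi u) (aut_of D pi v).
Proof. by apply: dense_eqB => q Dq; rewrite inB_meet !aut_ofE // inB_meet. Qed.

Lemma aut_of_compl u : aut_of D pi (complB u) = complB (aut_of D pi u).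
Proof.
apply: dense_eqB => q Dq; rewrite aut_ofE // !inB_compl; split=> Nu r rq ur.
  have [r' r'r Dr'] := D_dense r; move: (inB_le ur r'r); rewrite aut_ofE // => upr'.
  exact: Nu _ (pi_le Dq Dr' (cle_trans r'r rq)) upr'.
have [r' r'r Dr'] := D_dense r.
exact: Nu _ (pi_leV Dq Dr' (cle_trans r'r rq)) (aut_of_pi Dr' (inB_le ur r'r)).
Qed.

Lemma aut_of_is_aut : is_aut (aut_of D pi).
Proof. by split; [exact: inv_bij aut_ofK | split; [exact: aut_of_meet | exact: aut_of_compl]]. Qed.

Lemma sup_fam_transfer (J : Type) (F G : J -> B) q :
    (forall j t, D t -> inB (F j) (pi t) -> inB (G j) t) -> D q ->
  inB (supB (fun w => exists j, w = F j)) (pi q) -> inB (supB (fun w => exists j, w = G j)) q.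
Proof.
rewrite !inB_sup_fam => FG Dq Fpq r rq; have [r0 r0r Dr0] := D_dense r.
have [t [tpr0 [j Ft]]] := Fpq _ (pi_le Dq Dr0 (cle_trans r0r rq)).
have [t0 t0t Dt0] := D_dense t.
exists (pi t0); split; first exact: cle_trans (pi_leV Dr0 Dt0 (cle_trans t0t tpr0)) r0r.
by exists j; apply: FG (D_pi Dt0) _; rewrite piK //; exact: inB_le Ft t0t.
Qed.

Lemma aut_of_sup_fam (J : Type) (F : J -> B) :
  aut_of D pi (supB (fun w => exists j, w = F j)) =
  supB (fun w => exists j, w = aut_of D pi (F j)).
Proof.
apply: dense_eqB => q Dq; rewrite aut_ofE //; split.
  by apply: sup_fam_transfer => // j t Dt; rewrite aut_ofE.
move=> Fq; apply: (sup_fam_transfer (F := fun j => aut_of D pi (F j))) (D_pi Dq) _.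
  by move=> j t Dt; rewrite (aut_ofE _ (D_pi Dt)) piK.
by rewrite piK.
Qed.
End DenseInvolution.

(** * Names whose elements are check names *)

Section CheckPairNames.
Variables (Ix : Type) (nf : Ix -> ZF).

Definition pair_name (a : Ix -> B) : name := Name (fun i => check (nf i)) a.

Definition mem_val (a : Ix -> B) (i : Ix) : B :=
  supB (fun w => exists j : {j | zeq (nf i) (nf j)}, w = a (sval j)).

Lemma inB_mem_val a i p :
  inB (mem_val a i) p <-> reg (fun q => exists2 j, zeq (nf i) (nf j) & inB (a j) q) p.
Proof.
rewrite inB_sup_fam; split; apply: reg_sub => q; first by move=> [[j ij] aj]; exists j.
by move=> [j ij aj]; exists (exist _ j ij).
Qed.

Lemma mem_val_of a i j p : zeq (nf i) (nf j) -> inB (a j) p -> inB (mem_val a i) p.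
Proof. by move=> ij ajp; apply: (inB_sup_intro (v := a j)) => //; exists (exist _ j ij). Qed.

Lemma mem_val_zeq a i k : zeq (nf i) (nf k) -> mem_val a k = mem_val a i.
Proof.
move=> ik; apply: eqB => p; rewrite !inB_mem_val.
by split; apply: reg_sub => q [j zj aj]; exists j => //;
  [exact: zeq_trans ik zj | exact: zeq_trans (zeq_sym ik) zj].
Qed.

Lemma act_pair_name (s : B -> B) a :
  s topB = topB -> act s (pair_name a) = pair_name (fun i => s (a i)).
Proof. by move=> s_top /=; congr Name; apply: funext => i; exact: act_check. Qed.

Lemma beq_pair_name_check a p :
  (forall i, decides (mem_val a i) p) -> exists m, inB (beq (pair_name a) (check m)) p.
Proof.
move=> dec; exists (@zsup {i | inB (mem_val a i) p} (fun i => nf (sval i))).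
rewrite /pair_name; cbn [check beq]; rewrite inB_meet !inB_inf_fam; split.
  move=> i; apply/inB_imp => q qp aiq.
  have mip : inB (mem_val a i) p.
    case: (dec i) => // /inB_compl Nm; exfalso; exact: Nm q qp (mem_val_of (zeq_refl _) aiq).
  apply: (inB_sup_intro (v := meetB topB (beq (check (nf i)) (check (nf i))))).
    by exists (exist _ i mip).
  by rewrite inB_meet beq_check; split; [exact: inB_top | exact: zeq_refl].
move=> [i mip]; rewrite inB_imp_top inB_sup_fam.
move/inB_mem_val: (mip); apply: reg_sub => q [j ij ajq]; exists j.
by rewrite inB_meet beq_check; split => //; exact: zeq_sym.
Qed.

Lemma beq_pair_name_mem_l a1 a2 i q :
  inB (beq (pair_name a1) (pair_name a2)) q -> inB (a1 i) q -> inB (mem_val a2 i) q.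
Proof.
rewrite /pair_name; cbn [beq]; rewrite inB_meet !inB_inf_fam => -[+ _] a1q.
move=> /(_ i) /inB_imp /(_ q (@cle_refl q) a1q); rewrite inB_sup_fam inB_mem_val.
by apply: reg_sub => r [j]; rewrite inB_meet beq_check => -[a2r ij]; exists j.
Qed.

Lemma beq_pair_name_mem_r a1 a2 i q :
  inB (beq (pair_name a1) (pair_name a2)) q -> inB (a2 i) q -> inB (mem_val a1 i) q.
Proof.
rewrite /pair_name; cbn [beq]; rewrite inB_meet !inB_inf_fam => -[_ +] a2q.
move=> /(_ i) /inB_imp /(_ q (@cle_refl q) a2q); rewrite inB_sup_fam inB_mem_val.
by apply: reg_sub => r [j]; rewrite inB_meet beq_check => -[a1r ji]; exists j => //; exact: zeq_sym.
Qed.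

Definition splits (a1 a2 : Ix -> B) (s1 s2 : cond) : Prop :=
  exists i, (inB (a1 i) s1 /\ inB (complB (mem_val a2 i)) s2) \/
            (inB (a2 i) s2 /\ inB (complB (mem_val a1 i)) s1).

Lemma splits_le a1 a2 s1 s2 t1 t2 :
  splits a1 a2 s1 s2 -> cle t1 s1 -> cle t2 s2 -> splits a1 a2 t1 t2.
Proof.
move=> [i [[a1s m2s] | [a2s m1s]]] ts1 ts2; exists i; [left | right];
  by split; apply: inB_le ts1 || apply: inB_le ts2.
Qed.

Lemma splits_irrefl a r : ~ splits a a r r.
Proof.
by move=> [i [] [air /inB_compl Nm]]; exact: Nm r (@cle_refl r) (mem_val_of (zeq_refl _) air).
Qed.

Lemma splits_beq a1 a2 r :
  splits a1 a2 r r -> inB (complB (beq (pair_name a1) (pair_name a2))) r.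
Proof.
move=> [i sep]; apply/inB_compl => q qr e.
case: sep => -[air /inB_compl Nm]; apply: (Nm q qr).
  exact: beq_pair_name_mem_l e (inB_le air qr).
exact: beq_pair_name_mem_r e (inB_le air qr).
Qed.

(* If no such pair existed, [qa] would decide every [mem_val a i] and hence force
   [pair_name a] into [V]. *)
Lemma splits_dense a : (forall m p, ~ inB (beq (pair_name a) (check m)) p) ->
  forall qa qb, exists s1 s2, [/\ cle s1 qa, cle s2 qb & splits a a s1 s2].
Proof.
move=> x_out qa qb; apply: contrapT => Nsplit.
suff dec i : decides (mem_val a i) qa.
  by have [m] := beq_pair_name_check dec; exact: x_out.
have [| /inB_complN [r rqa /inB_mem_val mr]] := pselect (inB (complB (mem_val a i)) qa).
  by right.
have [r' [r'r [j ij ajr']]] := mr r (@cle_refl r).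
have /inB_complN [t tqb /inB_mem_val mt] : ~ inB (complB (mem_val a j)) qb.
  move=> Nj; apply: Nsplit; exists r', qb.
  by split; [exact: cle_trans r'r rqa | exact: cle_refl | exists j; left].
have [t' [t't [k jk akt']]] := mt t (@cle_refl t).
left; rewrite -(mem_val_zeq a (zeq_trans ij jk)).
apply: inB_dense => s sqa; apply: inB_complN => Nk; apply: Nsplit; exists s, t'.
by split => //; [exact: cle_trans t't tqb | exists k; right].
Qed.

Lemma aut_of_mem_val D pi a i : dense_involution D pi ->
  aut_of D pi (mem_val a i) = mem_val (fun j => aut_of D pi (a j)) i.
Proof. by move=> piD; exact: aut_of_sup_fam. Qed.

Lemma splits_aut_of D pi1 pi2 a r :
    dense_involution D pi1 -> dense_involution D pi2 -> D r ->
  splits a a (pi1 r) (pi2 r) ->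
  splits (fun i => aut_of D pi1 (a i)) (fun i => aut_of D pi2 (a i)) r r.
Proof.
move=> pi1D pi2D Dr [i sp]; exists i.
rewrite -(aut_of_mem_val _ _ pi1D) -(aut_of_mem_val _ _ pi2D) -!aut_of_compl //.
by case: sp => -[ai mi]; [left | right]; split; apply/aut_ofE.
Qed.
End CheckPairNames.

Fixpoint cond_of (n : nat) (u : nat -> bool) : cond :=
  if n is n'.+1 then (cond_of n' u).[n' <- u n'] else [fmap].

Lemma cond_ofE n u k : (cond_of n u).[? k] = if k < n then Some (u k) else None.
Proof.
elim: n => [|n IH] /=; first by rewrite fnd_fmap0.
by rewrite fnd_set IH ltnS; case: ltngtP => // ->.
Qed.

Definition flip (X : nat -> bool) (q : cond) : cond :=
  [fmap k : domf q => xorb (q k) (X (val k))].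

Lemma flipE X q k : (flip X q).[? k] = omap (xorb^~ (X k)) q.[? k].
Proof.
case: (fndP q k) => [kq | kNq]; last by rewrite not_fnd.
by rewrite (in_fnd (kq : k \in domf (flip X q))) ffunE.
Qed.

Lemma flip_cle X r q : cle r q -> cle (flip X r) (flip X q).
Proof.
by move=> rq k v; rewrite !flipE; case qk: q.[? k] => [w|] //= [<-]; rewrite (rq _ _ qk).
Qed.

Lemma flip_ext X Y q : (forall k, k \in domf q -> X k = Y k) -> flip X q = flip Y q.
Proof.
by move=> XY; apply/fmapP => k; rewrite !flipE; case: fndP => //= kq; rewrite XY.
Qed.

Lemma flip_flip X Y q : flip Y (flip X q) = flip (fun k => xorb (X k) (Y k)) q.
Proof.
by apply/fmapP => k; rewrite !flipE; case: q.[? k] => //= v; case: v; case: (X k); case: (Y k).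
Qed.

Lemma flipK X : involutive (flip X).
Proof.
by move=> q; apply/fmapP => k; rewrite !flipE; case: q.[? k] => //= v; case: v; case: (X k).
Qed.

Definition supp_lt (q : cond) (N : nat) : Prop := forall k, k \in domf q -> k < N.

Definition dom_bound (q : cond) : nat := \max_(k : domf q) (val k).+1.

Lemma dom_boundP q : supp_lt q (dom_bound q).
Proof. by move=> k kq; exact: (@leq_bigmax _ (fun k : domf q => (val k).+1) (Sub k kq)). Qed.

Definition restr (q : cond) (l : nat) : cond := cond_of l (fun k => odflt false q.[? k]).

Definition agree (q q' : cond) (l : nat) : Prop := forall k, k < l -> q.[? k] = q'.[? k].

Lemma restr_agree q q' l : agree q q' l -> restr q l = restr q' l.
Proof. by move=> qq'; apply/fmapP => k; rewrite !cond_ofE; case: ifP => // /qq' ->. Qed.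

Lemma restr_cle q l : (forall k, k < l -> k \in domf q) -> cle q (restr q l).
Proof.
move=> dom k v; rewrite cond_ofE; case: ifP => // /dom.
by rewrite -fndSome; case: q.[? k] => // w _ [->].
Qed.

Lemma restr_le q l : supp_lt q l -> cle (restr q l) q.
Proof. by move=> ql k v qk; rewrite cond_ofE qk ql // -fndSome qk. Qed.

(** * Automorphisms fixing a given element of [B] *)

Section DecidingLength.
Variable b : B.

Definition decided_at (q : cond) (l : nat) : Prop :=
  (forall k, k < l -> k \in domf q) /\ decides b (restr q l).

Definition decisive (q : cond) : Prop := exists l, decided_at q l.

Definition dec_len (q : cond) : nat :=
  if pselect (exists l, `[< decided_at q l >]) is left ex then ex_minn ex else 0.

Lemma dec_lenP q :
  decisive q -> decided_at q (dec_len q) /\ forall l, decided_at q l -> dec_len q <= l.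
Proof.
move=> [l ql]; rewrite /dec_len; case: pselect => [ex | []]; last by exists l; apply/asboolP.
by case: ex_minnP => m /asboolP qm min; split => // l' /asboolP; exact: min.
Qed.

Lemma decided_at_agree q q' l : agree q q' l -> decided_at q l -> decided_at q' l.
Proof.
move=> qq' [dom dec]; split; last by rewrite -(restr_agree qq').
by move=> k kl; rewrite -fndSome -qq' // fndSome dom.
Qed.

Lemma dec_len_agree q q' :
  decisive q -> agree q q' (dec_len q) -> decisive q' /\ dec_len q' = dec_len q.
Proof.
move=> Dq qq'; have [qd qmin] := dec_lenP Dq.
have q'd := decided_at_agree qq' qd; have Dq' : decisive q' by exists (dec_len q).
have [q'd' q'min] := dec_lenP Dq'; split=> //; apply/eqP; rewrite eqn_leq q'min //=.
apply: qmin; apply: decided_at_agree q'd' => k kl.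
by rewrite qq' //; exact: leq_trans kl (q'min _ q'd).
Qed.

Lemma decisive_le q r : decisive q -> cle r q -> decisive r /\ dec_len r = dec_len q.
Proof.
move=> Dq rq; have [[dom _] _] := dec_lenP Dq; apply: dec_len_agree Dq _ => k kl.
by move: (dom k kl); rewrite -fndSome; case qk: q.[? k] => [v|] // _; rewrite (rq _ _ qk).
Qed.

Lemma decisive_dense q : exists2 r, cle r q & decisive r.
Proof.
have [q1 q1q dec1] := decides_dense b q; set M := dom_bound q1.
have q2q1 : cle (restr q1 M) q1 := restr_le (@dom_boundP q1).
exists (restr q1 M); first exact: cle_trans q2q1 q1q.
exists M; split; first by move=> k kM; rewrite -fndSome cond_ofE kM.
have -> : restr (restr q1 M) M = restr q1 M.
  by apply/fmapP => k; rewrite !cond_ofE; case: ifP => // ->.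
by case: dec1 => [? | ?]; [left | right]; exact: inB_le q2q1.
Qed.

(* Flipping only at or above [dec_len q] keeps [restr q (dec_len q)], hence [dec_len q]
   and the decision of [b], unchanged. *)
Definition flip_above (X : nat -> bool) (q : cond) : cond :=
  flip (fun k => (dec_len q <= k) && X k) q.

Lemma flip_above_agree X q : agree q (flip_above X q) (dec_len q).
Proof. by move=> k kl; rewrite flipE leqNgt kl; case: q.[? k] => //= -[]. Qed.

Lemma flip_above_decisive X q :
  decisive q -> decisive (flip_above X q) /\ dec_len (flip_above X q) = dec_len q.
Proof. by move=> Dq; exact: dec_len_agree Dq (@flip_above_agree X q). Qed.

Lemma flip_above_involution X : dense_involution decisive (flip_above X).
Proof.
split.
- exact: decisive_dense.
- by move=> q /(@flip_above_decisive X) [].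
- by move=> q /(@flip_above_decisive X) [_ E]; rewrite /flip_above E flipK.
- by move=> q r Dq _ rq; have [_ E] := decisive_le Dq rq; rewrite /flip_above E; exact: flip_cle.
Qed.

Lemma flip_above_flip_above X Y s : decisive s ->
  flip_above Y (flip_above X s) = flip (fun k => (dec_len s <= k) && xorb (X k) (Y k)) s.
Proof.
move=> Ds; have [_ E] := flip_above_decisive X Ds; rewrite /flip_above E flip_flip.
by apply: flip_ext => k _; case: (_ <= k).
Qed.

Definition flip_aut (X : nat -> bool) : B -> B := aut_of decisive (flip_above X).

Lemma flip_aut_fix X : flip_aut X b = b.
Proof.
have piD := flip_above_involution X.
apply: (dense_eqB piD) => q Dq; rewrite (aut_ofE piD _ Dq).
have [[dom dec] _] := dec_lenP Dq.
have [dom' _] := decided_at_agree (@flip_above_agree X q) (conj dom dec).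
apply: (decides_le_iff dec); last exact: restr_cle dom.
by rewrite (restr_agree (@flip_above_agree X q)); exact: restr_cle dom'.
Qed.

End DecidingLength.

(** * Fusion *)

Lemma catf_cle (q s : cond) : cle (catf q s) s.
Proof. by move=> k v sk; rewrite fnd_cat -fndSome sk. Qed.

Lemma flip_catf_cle Y (s1 s2 : cond) :
    (forall k w1 w2, s1.[? k] = Some w1 -> s2.[? k] = Some w2 -> w2 = xorb w1 (Y k)) ->
  cle (flip Y (catf (flip Y s2) s1)) s2.
Proof.
move=> compat k w s2k; rewrite flipE fnd_cat -fndSome.
case s1k: s1.[? k] => [w1|] /=; first by rewrite (compat _ _ _ s1k s2k).
by rewrite flipE s2k /=; case: (w); case: (Y k).
Qed.

Section Fusion.
Variable S : cond -> cond -> Prop.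
Hypothesis S_le : forall s1 s2 t1 t2, S s1 s2 -> cle t1 s1 -> cle t2 s2 -> S t1 t2.
Hypothesis S_dense : forall qa qb, exists s1 s2, [/\ cle s1 qa, cle s2 qb & S s1 s2].

Definition splice (N : nat) (P G : nat -> bool) (k : nat) : bool := if k < N then P k else G k.

Definition realizes (N L : nat) (P G : nat -> bool) (q : cond) : Prop :=
  exists s, [/\ supp_lt s L, cle s q & S s (flip (splice N P G) s)].

Lemma realizes_mono N L L' P P' G G' q q' :
    L <= L' -> cle q' q -> (forall k, k < N -> P' k = P k) ->
    (forall k, k < L -> G' k = G k) ->
  realizes N L P' G' q' -> realizes N L' P G q.
Proof.
move=> LL' q'q PP' GG' [s [sL sq' Ss]]; exists s; split.
- by move=> k /sL kL; exact: leq_trans kL LL'.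
- exact: cle_trans sq' q'q.
rewrite -(@flip_ext (splice N P' G')) // => k /sL kL.
by rewrite /splice; case: ifP => [/PP' | _]; last exact: GG'.
Qed.

(* The pair [s1], [s2] given by [S_dense] for [restr q L] and its flip by
   [splice N P G0] is merged into one extension [s] of [s1]: the new bits of [G1]
   above [L] record where [s1] and [s2] differ, which makes [flip (splice N P G1) s]
   extend [s2]. *)
Lemma fusion_step N L G0 P q : N <= L -> supp_lt q N ->
  exists L' G1, [/\ L <= L', forall k, k < L -> G1 k = G0 k & realizes N L' P G1 q].
Proof.
move=> NL qN; set qa := restr q L.
have [s1 [s2 [s1a s2b S12]]] := S_dense qa (flip (splice N P G0) qa).
pose G1 k := if k < L then G0 k else s1.[? k] != s2.[? k].
exists (maxn L (maxn (dom_bound s1) (dom_bound s2))), G1; split.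
- exact: leq_maxl.
- by move=> k kL; rewrite /G1 kL.
exists (catf (flip (splice N P G1) s2) s1); split.
- move=> k; rewrite mem_catf => /orP [/(@dom_boundP s2) | /(@dom_boundP s1)] kb;
    by rewrite !leq_max kb ?orbT.
- apply: cle_trans (@catf_cle _ _) (cle_trans s1a (restr_le _)) => k /qN kN.
  exact: leq_trans kN NL.
apply: S_le S12 (@catf_cle _ _) (flip_catf_cle _) => k w1 w2 s1k s2k.
case: (ltnP k L) => kL; last first.
  by rewrite /splice /G1 ltnNge (leq_trans NL kL) ltnNge kL s1k s2k /=; case: (w1); case: (w2).
have qak : qa.[? k] = Some (odflt false q.[? k]) by rewrite cond_ofE kL.
have := s1a _ _ qak; rewrite s1k => -[->].
have := s2b k (xorb (odflt false q.[? k]) (splice N P G0 k)).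
by rewrite flipE qak s2k => /(_ erefl) [->]; rewrite /splice /G1 kL.
Qed.

Lemma fusion_batch (T : eqType) (rs : seq T) (P : T -> nat -> bool) (q : T -> cond) N :
    (forall t, supp_lt (q t) N) ->
  exists L G, N < L /\ {in rs, forall t, realizes N L (P t) G (q t)}.
Proof.
move=> qN; elim: rs => [|t rs [L [G [NL R]]]]; first by exists N.+1, xpred0.
have [L' [G' [LL' G'G Rt]]] := fusion_step G (P t) (ltnW NL) (qN t).
exists L', G'; split=> [|t']; first exact: leq_trans NL LL'.
rewrite inE => /predU1P [-> // | t'rs].
by apply: realizes_mono LL' (@cle_refl _) (fun _ _ => erefl) _ (R t' t'rs) => k /G'G.
Qed.

Lemma supp_lt_cond_of n u : supp_lt (cond_of n u) n.
Proof. by move=> k; rewrite -fndSome cond_ofE; case: ifP. Qed.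

(* Only the values of [q] and [P] below [N] matter, so finitely many requests suffice. *)
Lemma fusion_stage N : exists L G, N < L /\ forall P q, supp_lt q N -> realizes N L P G q.
Proof.
have [L [G [NL R]]] := @fusion_batch _ (enum {: N.-tuple bool * N.-tuple bool})
  (fun t => nth false t.2) (fun t => cond_of N (nth false t.1)) N
  (fun t => @supp_lt_cond_of _ _).
exists L, G; split=> // P q qN.
pose u := [tuple odflt false q.[? k] | k < N]; pose w := [tuple P k | k < N].
have nth_tuple (f : nat -> bool) k (kN : k < N) : nth false [tuple f i | i < N] k = f k.
  by rewrite -[k]/(nat_of_ord (Ordinal kN)) nth_mktuple.
apply: realizes_mono (leqnn L) _ _ (fun _ _ => erefl) (R (u, w) (mem_enum _ _)).
  move=> k v qk; have kN : k < N by apply: qN; rewrite -fndSome qk.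
  by rewrite cond_ofE kN /u [_.1]/= (nth_tuple (fun k => odflt false q.[? k])) // qk.
by move=> k kN; rewrite /w [_.2]/= (nth_tuple P).
Qed.

Lemma fusion : exists (Nseq : nat -> nat) (G : nat -> nat -> bool),
  (forall m, Nseq m < Nseq m.+1) /\
  forall m P q, supp_lt q (Nseq m) -> realizes (Nseq m) (Nseq m.+1) P (G m) q.
Proof.
have /choice [F FP] : forall N, exists LG : nat * (nat -> bool),
    N < LG.1 /\ forall P q, supp_lt q N -> realizes N LG.1 P LG.2 q.
  by move=> N; have [L [G ?]] := fusion_stage N; exists (L, G).
pose Nseq m := iter m (fun N => (F N).1) 0.
by exists Nseq, (fun m => (F (Nseq m)).2); split=> m; have [? ?] := FP (Nseq m).
Qed.

End Fusion.

(** * Coding [nat -> bool] into the blocks *)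

Lemma logn2_unbounded n M : exists2 m, M <= m & logn 2 m = n.
Proof.
exists (2 ^ n * M.*2.+1).
  by apply: leq_trans (leq_pmull _ (expn_gt0 2 n)); rewrite -addnn ltnW // ltnS leq_addr.
rewrite lognM ?expn_gt0 // pfactorK // logn_coprime ?addn0 //.
by rewrite coprime2n /= odd_double.
Qed.

Section Coding.
Variables (Nseq : nat -> nat) (G : nat -> nat -> bool).
Hypothesis Nseq_lt : forall m, Nseq m < Nseq m.+1.

Definition in_block (m k : nat) : bool := Nseq m <= k < Nseq m.+1.

(* Every [n] is [logn 2 m] for arbitrarily large [m], so each bit of [al] controls
   blocks beyond any finite condition. *)
Definition code (al : nat -> bool) (k : nat) : bool :=
  [exists m : 'I_k.+1, [&& al (logn 2 m), in_block m k & G m k]].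

Lemma Nseq_mono : {homo Nseq : m n / m <= n}.
Proof. by apply: homo_leq; [exact: leqnn | exact: leq_trans | move=> m; exact: ltnW]. Qed.

Lemma leq_Nseq m : m <= Nseq m.
Proof. by elim: m => // m IH; exact: leq_ltn_trans IH (Nseq_lt m). Qed.

Lemma in_block_uniq m m' k : in_block m k -> in_block m' k -> m = m'.
Proof.
have le m1 m2 : in_block m1 k -> in_block m2 k -> m1 <= m2.
  move=> /andP [m1k _] /andP [_ km2]; rewrite leqNgt; apply/negP => m2m1.
  by have := leq_trans (Nseq_mono m2m1) m1k; rewrite leqNgt km2.
by move=> mk m'k; apply/eqP; rewrite eqn_leq !le.
Qed.

Lemma code_block al m k : in_block m k -> code al k = al (logn 2 m) && G m k.
Proof.
move=> mk; apply/existsP/andP => [[m' /and3P [alm' m'k Gm']] | [alm Gm]].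
  by rewrite (in_block_uniq mk m'k).
have mk1 : m < k.+1 by rewrite ltnS (leq_trans (leq_Nseq m)) //; case/andP: mk.
by exists (Ordinal mk1); rewrite /= alm mk Gm.
Qed.

Variable S : cond -> cond -> Prop.
Hypothesis realizes_G :
  forall m P q, supp_lt q (Nseq m) -> realizes S (Nseq m) (Nseq m.+1) P (G m) q.
Variable b : B.

Lemma dec_len_bound q : decisive b q -> dec_len b q <= dom_bound q.
Proof.
move=> /dec_lenP [[dom _] _]; rewrite leqNgt; apply/negP => /dom /(@dom_boundP q).
by rewrite ltnn.
Qed.

Lemma code_splits al be n q : al n != be n -> decisive b q ->
  exists r, [/\ cle r q, decisive b r &
              S (flip_above b (code al) r) (flip_above b (code be) r)].
Proof.
move=> albe Dq; have [m qm logm] := logn2_unbounded n (dom_bound q).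
have [piD_dense piD_D piK pi_le] := flip_above_involution b (code al).
set q0 := flip_above b (code al) q; set l := dec_len b q.
have [Dq0 q0l] := flip_above_decisive (code al) Dq.
have q0N : supp_lt q0 (Nseq m).
  by move=> k /(@dom_boundP q) kq; rewrite (leq_trans kq) // (leq_trans qm) ?leq_Nseq.
pose P k := (l <= k) && xorb (code al k) (code be k).
have [s [sN sq0 Ss]] := realizes_G P q0N.
have [Ds sl] := decisive_le Dq0 sq0; rewrite q0l in sl.
exists (flip_above b (code al) s); split.
- by rewrite -(piK q Dq); exact: pi_le Dq0 Ds sq0.
- exact: piD_D.
rewrite piK // flip_above_flip_above // sl.
rewrite (@flip_ext _ (splice (Nseq m) P (G m))) // => k /sN km.
rewrite /splice; case: ifP => // /negbT.
rewrite -leqNgt => mk; have blk : in_block m k by rewrite /in_block mk.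
have -> : l <= k.
  by rewrite (leq_trans (dec_len_bound Dq)) // (leq_trans qm) // (leq_trans (leq_Nseq m)).
by rewrite !(code_block _ blk) logm; case: (al n) (be n) albe (G m k) => [] [] // _ [].
Qed.
End Coding.

Section CodedAutomorphisms.
Variables (Ix : Type) (nf : Ix -> ZF) (a : Ix -> B) (b : B).
Variables (Nseq : nat -> nat) (G : nat -> nat -> bool).
Hypothesis Nseq_lt : forall m, Nseq m < Nseq m.+1.
Hypothesis realizes_G : forall m P q, supp_lt q (Nseq m) ->
  realizes (splits nf a a) (Nseq m) (Nseq m.+1) P (G m) q.

Definition coded_aut (al : nat -> bool) : B -> B := flip_aut b (code Nseq G al).

Lemma coded_aut_splits al be : al <> be -> forall q,
  exists2 r, cle r q & splits nf (fun i => coded_aut al (a i)) (fun i => coded_aut be (a i)) r r.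
Proof.
move=> albe q; have [n albe_n] : exists n, al n != be n.
  apply: contrapT => /forallNP albe'; apply: albe; apply: funext => n.
  by apply/eqP/negPn/negP/albe'.
have [q' q'q Dq'] := decisive_dense b q.
have [r [rq' Dr Sr]] := code_splits Nseq_lt realizes_G albe_n Dq'.
exists r; first exact: cle_trans rq' q'q.
exact: splits_aut_of (flip_above_involution _ _) (flip_above_involution _ _) Dr Sr.
Qed.

Lemma coded_aut_inj : injective coded_aut.
Proof.
move=> al be E; apply: contrapT => /coded_aut_splits /(_ [fmap]) [r _].
by rewrite E; exact: splits_irrefl.
Qed.

Lemma coded_aut_neq al be : al <> be ->
  forces topB (complB (beq (act (coded_aut al) (pair_name nf a))
                           (act (coded_aut be) (pair_name nf a)))).
Proof.
move=> albe p _; rewrite !act_pair_name; try exact: aut_of_top (flip_above_involution _ _).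
apply: inB_dense => q _; have [r rq Sr] := coded_aut_splits albe q.
by exists r => //; exact: splits_beq.
Qed.
End CodedAutomorphisms.

Lemma no_injection_to_nat (g : (nat -> bool) -> nat) : ~ injective g.
Proof.
move=> g_inj; pose d n := ~~ `[< exists2 al, g al = n & al n >].
have : d (g d) = ~~ d (g d).
  rewrite {1}/d; congr negb; apply/asboolP/idP => [[al /g_inj -> //] | dgd]; by exists d.
by case: (d (g d)).
Qed.

Lemma check_pairsP x : check_pairs x -> exists Ix (nf : Ix -> ZF) a, x = pair_name nf a.
Proof.
by case: x => Ix f a /= /choice [nf fP]; exists Ix, nf, a; congr Name; exact: funext.
Qed.

Lemma not_in_checkV x :
  forces topB (complB (in_checkV x)) -> forall m p, ~ inB (beq x (check m)) p.
Proof.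
move=> x_out m p xm; have /inB_compl := x_out p (@inB_top p).
by apply; [exact: cle_refl | apply: inB_sup_intro xm; exists m].
Qed.

Theorem lemma5p5 (x : name) :
  forces topB (sub_checkV x) ->
  forces topB (complB (in_checkV x)) ->
  check_pairs x ->
  forall b : B, exists A : (B -> B) -> Prop,
    (forall s, A s -> is_aut s) /\ uncountable A /\
    (forall s t, A s -> A t -> s <> t ->
       s b = b /\ t b = b /\ forces b (complB (beq (act s x) (act t x)))).
Proof.
(* [check_pairs x] already puts the elements of [x] in the ground model. *)
move=> _ x_out /check_pairsP [Ix [nf [a x_def]]] b; subst x.
have [Nseq [G [Nseq_lt realizes_G]]] :=
  fusion (@splits_le _ nf a a) (splits_dense (not_in_checkV x_out)).
pose sigma := coded_aut b Nseq G.
exists (fun s => exists al, s = sigma al); split; [|split].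
- by move=> _ [al ->]; exact: aut_of_is_aut (flip_above_involution _ _).
- move=> [h h_inj].
  apply: (@no_injection_to_nat (fun al => h (exist _ (sigma al) (ex_intro _ al erefl)))).
  by move=> al be /h_inj [/(coded_aut_inj Nseq_lt realizes_G)].
move=> _ _ [al ->] [be ->] sab; split; [exact: flip_aut_fix | split; first exact: flip_aut_fix].
have albe : al <> be by move=> E; apply: sab; rewrite E.
have neq := coded_aut_neq b Nseq_lt realizes_G albe.
by move=> p _; exact: neq p (@inB_top p).
Qed.
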